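(* Let $p$ be a prime and $X$ a countably infinite set. Then the ring $\mathcal{B}_{(1)}(\mathbb{Q}_p(X))$ is an infinite sum ring. In particular, $K_0(\mathcal{B}_{(1)}(\mathbb{Q}_p(X)))=0$.
   Context: $\mathbb{Q}_p(X)$ is the set of maps $\xi:X\to\mathbb{Q}_p$ with $|\xi(i)|_p\le1$ for all but finitely many $i$, a $\mathbb{Z}_p$-module under coordinatewise operations, with the topology $\tau$ in which $A\subseteq\mathbb{Q}_p(X)$ is open iff for every finite $P\subseteq X$ the set $A\cap\big(\prod_{i\in P}\mathbb{Q}_p\times\prod_{j\in X\setminus P}\mathbb{Z}_p\big)$ is open in the product topology. $\mathcal{B}(\mathbb{Q}_p(X))$ is the ring of $\tau$-continuous $\mathbb{Z}_p$-linear maps, normed by $\|T\|=\sup_{\|\xi\|\le1}\|T\xi\|$ with $\|\xi\|=\max_i|\xi(i)|_p$, and $\mathcal{B}_{(1)}(\mathbb{Q}_p(X))$ is the subring of operators of norm at most $1$. A sum ring is a unital ring $R$ with elements $a_0,b_0,a_1,b_1$ such that $a_0b_0=a_1b_1=1$ and $b_0a_0+b_1a_1=1$; then $x\boxplus y:=b_0xa_0+b_1ya_1$ defines a unital ring homomorphism $R\times R\to R$. An infinite sum ring is a sum ring with a unital ring homomorphism $R\to R$, $a\mapsto a^\infty$, such that $a\boxplus a^\infty=a^\infty$ for all $a\in R$. *)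

From mathcomp Require Import all_boot all_order all_algebra.
Set Implicit Arguments. Unset Strict Implicit. Unset Printing Implicit Defensive.

Section Padic.
Variable p : nat.

Definition digit := 'I_p.-1.+1.
(* x = \sum_i x i * p^i *)
Definition Zp := nat -> digit.

Definition zval (n : nat) (x : Zp) : nat := \sum_(i < n) (x i : nat) * p ^ i.

(* the p-adic integer whose residue mod p^n is (f n mod p^n), for any
   coherent family f (f (n.+1) = f n mod p^n) *)
Definition zp_of_res (f : nat -> nat) : Zp :=
  fun i => inord ((f i.+1 %/ p ^ i) %% p).

Definition zp0 : Zp := fun _ => ord0.
Definition zp1 : Zp := zp_of_res (fun _ => 1%N).
Definition zp_add (x y : Zp) : Zp := zp_of_res (fun n => zval n x + zval n y)%N.
Definition zp_mul (x y : Zp) : Zp := zp_of_res (fun n => zval n x * zval n y)%N.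
Definition zp_opp (x : Zp) : Zp := zp_of_res (fun n => p ^ n - zval n x)%N.
Definition zp_pmul (j : nat) (x : Zp) : Zp := zp_of_res (fun n => p ^ j * zval n x)%N.
(* division by p^j (meaningful when the first j digits vanish) *)
Definition zp_shift (j : nat) (x : Zp) : Zp := fun i => x (i + j)%N.

(* ---------- Q_p: x = z / p^k in lowest terms ---------- *)
Record Qp := MkQp {
  qk : nat;
  qz : Zp;
  qok : (qk == 0%N) || (qz 0%N != ord0) }.

Definition lowdeg (k : nat) (z : Zp) : nat :=
  find (fun i => z i != ord0) (iota 0 k).

Lemma normalize_ok (k : nat) (z : Zp) :
  ((k - lowdeg k z)%N == 0%N) || (zp_shift (lowdeg k z) z 0%N != ord0).
Proof.
rewrite /zp_shift add0n /lowdeg.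
have := find_size (fun i => z i != ord0) (iota 0 k); rewrite size_iota.
rewrite leq_eqVlt => /orP [/eqP -> | lt]; first by rewrite subnn.
apply/orP; right.
have := nth_find 0%N (a := fun i => z i != ord0) (s := iota 0 k).
rewrite has_find size_iota => /(_ lt).
by rewrite nth_iota // add0n.
Qed.

Definition normalize (k : nat) (z : Zp) : Qp :=
  @MkQp (k - lowdeg k z)%N (zp_shift (lowdeg k z) z) (normalize_ok k z).

Definition q0 : Qp := normalize 0 zp0.
Definition qadd (x y : Qp) : Qp :=
  let K := maxn (qk x) (qk y) in
  normalize K (zp_add (zp_pmul (K - qk x) (qz x)) (zp_pmul (K - qk y) (qz y))).
Definition qopp (x : Qp) : Qp := normalize (qk x) (zp_opp (qz x)).
Definition qmul (x y : Qp) : Qp := normalize (qk x + qk y) (zp_mul (qz x) (qz y)).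
Definition qscale (a : Zp) (x : Qp) : Qp := normalize (qk x) (zp_mul a (qz x)).

Definition inZp (x : Qp) : bool := qk x == 0%N.
Definition in_pnZp (n : nat) (x : Qp) : bool :=
  (qk x == 0%N) && [forall i : 'I_n, qz x i == ord0].

Lemma inZp_normalize0 z : inZp (normalize 0 z).
Proof. by rewrite /inZp /= sub0n. Qed.

Lemma inZp_qadd x y : inZp x -> inZp y -> inZp (qadd x y).
Proof.
rewrite /qadd /inZp => /eqP hx /eqP hy; rewrite hx hy maxnn.
by rewrite /= sub0n.
Qed.
Lemma inZp_qopp x : inZp x -> inZp (qopp x).
Proof. by rewrite /inZp /qopp => /eqP ->; rewrite /= sub0n. Qed.
Lemma inZp_qscale a x : inZp x -> inZp (qscale a x).
Proof. by rewrite /inZp /qscale => /eqP ->; rewrite /= sub0n. Qed.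

Variable X : eqType.

Definition isQpX (xi : X -> Qp) : Prop :=
  exists s : seq X, forall i, ~~ inZp (xi i) -> i \in s.

Definition QpX := {xi : X -> Qp | isQpX xi}.

Lemma isQpX_add (xi eta : QpX) : isQpX (fun i => qadd (sval xi i) (sval eta i)).
Proof.
case: xi => xi [s hs]; case: eta => eta [t ht]; exists (s ++ t) => i /= h.
rewrite mem_cat; apply/orP; case: (boolP (inZp (xi i))) => hx; last by left; apply: hs.
case: (boolP (inZp (eta i))) => hy; last by right; apply: ht.
by move: h; rewrite inZp_qadd.
Qed.
Lemma isQpX_opp (xi : QpX) : isQpX (fun i => qopp (sval xi i)).
Proof.
case: xi => xi [s hs]; exists s => i /= h; apply: hs; apply/negP => hx.
by move: h; rewrite inZp_qopp.
Qed.
Lemma isQpX_scale a (xi : QpX) : isQpX (fun i => qscale a (sval xi i)).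
Proof.
case: xi => xi [s hs]; exists s => i /= h; apply: hs; apply/negP => hx.
by move: h; rewrite inZp_qscale.
Qed.
Lemma isQpX_0 : isQpX (fun _ => q0).
Proof. by exists [::] => i; rewrite inZp_normalize0. Qed.

Definition vadd (xi eta : QpX) : QpX := exist _ _ (isQpX_add xi eta).
Definition vopp (xi : QpX) : QpX := exist _ _ (isQpX_opp xi).
Definition vscale (a : Zp) (xi : QpX) : QpX := exist _ _ (isQpX_scale a xi).
Definition v0 : QpX := exist _ _ isQpX_0.

Definition vnorm_le1 (xi : QpX) : Prop := forall i, inZp (sval xi i).

(* xi \in E_P = prod_{i in P} Q_p x prod_{j notin P} Z_p, for finite P = s *)
Definition inEP (s : seq X) (xi : QpX) : Prop :=
  forall j, j \notin s -> inZp (sval xi j).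

(* A \cap E_P is open in the product topology of E_P: around each of its
   points it contains a basic open set of E_P, i.e. one obtained by
   prescribing finitely many coordinates up to p^n Z_p *)
Definition open_in_EP (s : seq X) (A : QpX -> Prop) : Prop :=
  forall xi, inEP s xi -> A xi ->
    exists (F : seq X) (n : nat), forall eta, inEP s eta ->
      (forall i, i \in F -> in_pnZp n (qadd (sval eta i) (qopp (sval xi i)))) ->
      A eta.

Definition tau_open (A : QpX -> Prop) : Prop :=
  forall s : seq X, open_in_EP s A.

Definition tau_continuous (T : QpX -> QpX) : Prop :=
  forall A, tau_open A -> tau_open (fun xi => A (T xi)).

Definition Zp_linear (T : QpX -> QpX) : Prop :=
  (forall xi eta, T (vadd xi eta) = vadd (T xi) (T eta)) /\
  (forall a xi, T (vscale a xi) = vscale a (T xi)).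

Definition inB (T : QpX -> QpX) : Prop := Zp_linear T /\ tau_continuous T.

Definition opnorm_le1 (T : QpX -> QpX) : Prop :=
  forall xi, vnorm_le1 xi -> vnorm_le1 (T xi).

Definition inB1 (T : QpX -> QpX) : Prop := inB T /\ opnorm_le1 T.

Definition opadd (T S : QpX -> QpX) : QpX -> QpX := fun xi => vadd (T xi) (S xi).
Definition op0 : QpX -> QpX := fun _ => v0.
Definition opmul (T S : QpX -> QpX) : QpX -> QpX := fun xi => T (S xi).
Definition op1 : QpX -> QpX := id.

Definition boxplus (a0 b0 a1 b1 x y : QpX -> QpX) : QpX -> QpX :=
  opadd (opmul b0 (opmul x a0)) (opmul b1 (opmul y a1)).

Definition B1_infinite_sum_ring : Prop :=
  exists a0 b0 a1 b1 : QpX -> QpX,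
    [/\ inB1 a0, inB1 b0, inB1 a1 & inB1 b1] /\
    [/\ opmul a0 b0 = op1, opmul a1 b1 = op1 &
        opadd (opmul b0 a0) (opmul b1 a1) = op1] /\
    exists inf : (QpX -> QpX) -> (QpX -> QpX),
      (forall a, inB1 a -> inB1 (inf a)) /\
      inf op1 = op1 /\
      (forall a b, inB1 a -> inB1 b -> inf (opadd a b) = opadd (inf a) (inf b)) /\
      (forall a b, inB1 a -> inB1 b -> inf (opmul a b) = opmul (inf a) (inf b)) /\
      (forall a, inB1 a -> boxplus a0 b0 a1 b1 a (inf a) = inf a).

Definition opmx (m n : nat) := 'M[QpX -> QpX]_(m, n).

Definition mx_inB1 m n (A : opmx m n) : Prop := forall i j, inB1 (A i j).

Definition mx_mul m n k (A : opmx m n) (B : opmx n k) : opmx m k :=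
  (\matrix_(i, j) foldr opadd op0 [seq opmul (A i l) (B l j) | l <- enum 'I_n])%R.

Definition mx_idem n (e : opmx n n) : Prop := mx_mul e e = e.

(* Murray--von Neumann (algebraic) equivalence of idempotent matrices,
   i.e. isomorphism of the corresponding f.g. projective modules *)
Definition mx_equiv n m (e : opmx n n) (f : opmx m m) : Prop :=
  exists (a : opmx n m) (b : opmx m n),
    mx_inB1 a /\ mx_inB1 b /\ mx_mul a b = e /\ mx_mul b a = f.

Definition mx_dsum n k (e : opmx n n) (g : opmx k k) : opmx (n + k) (n + k) :=
  block_mx e (const_mx op0) (const_mx op0) g.

(* K_0(B_(1)) = 0: any two classes [e], [f] of the Grothendieck group
   coincide, i.e. e (+) g ~ f (+) g for some idempotent g *)
Definition B1_K0_trivial : Prop :=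
  forall n m (e : opmx n n) (f : opmx m m),
    mx_inB1 e -> mx_idem e -> mx_inB1 f -> mx_idem f ->
    exists k (g : opmx k k), mx_inB1 g /\ mx_idem g /\
      mx_equiv (mx_dsum e g) (mx_dsum f g).

End Padic.

(* Write X = N x X, a point x lying in block [blk x] at position [pos x].
   Reading block 0 (a0), putting a vector into block 0 (b0), and shifting the
   blocks down (a1) or up (b1) are reindexings of coordinates, hence
   tau-continuous contractions, and they satisfy the sum ring identities.  The
   operator a^oo that applies a in every block is a ring endomorphism with
   a (+) a^oo = a^oo.  It is again tau-continuous: a point of E_P has
   non-integral coordinates in finitely many blocks only, and on every other
   block a^oo maps it into the unit ball.  K_0 then dies by the Eilenberg
   swindle: for an idempotent matrix e, e (+) e^oo is equivalent to e^oo. *)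

From HB Require Import structures.
From mathcomp Require Import all_boot all_order all_algebra.
From mathcomp Require Import boolp zify ring.
From Stdlib Require Cantor.
From Pilot Require Import Defs.
Set Implicit Arguments. Unset Strict Implicit. Unset Printing Implicit Defensive.

Import GRing.Theory.

(** * Stable equivalence of idempotents in an infinite sum ring *)

Section SwindleK0.
Local Open Scope ring_scope.
Variable R : pzRingType.
Variables a0 b0 a1 b1 : R.
Hypothesis a0b0 : a0 * b0 = 1.
Hypothesis a1b1 : a1 * b1 = 1.
Hypothesis b0a0_b1a1 : b0 * a0 + b1 * a1 = 1.
Variable rep : R -> R.
Hypothesis repD : {morph rep : x y / x + y}.
Hypothesis repM : {morph rep : x y / x * y}.
Hypothesis rep_box : forall x, b0 * x * a0 + b1 * rep x * a1 = rep x.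

Lemma a0b1_eq0 : a0 * b1 = 0.
Proof.
apply: (@addrI _ (a0 * b1)); rewrite addr0 -{3}[a0]mulr1 -b0a0_b1a1.
by rewrite mulrDr mulrDl !mulrA a0b0 -!mulrA a1b1 mul1r mulr1.
Qed.

Lemma a1b0_eq0 : a1 * b0 = 0.
Proof.
apply: (@addrI _ (a1 * b0)); rewrite addr0 -{3}[a1]mulr1 -b0a0_b1a1.
by rewrite mulrDr mulrDl !mulrA a1b1 -!mulrA a0b0 mul1r mulr1.
Qed.

Lemma rep0 : rep 0 = 0.
Proof. by apply: (@addrI _ (rep 0)); rewrite -repD !addr0. Qed.

Definition diag2_mx m n (x : 'M[R]_m) (y : 'M[R]_n) : 'M[R]_(m + n) :=
  block_mx x 0 0 y.

Definition idem_mx n (x : 'M[R]_n) := x *m x = x.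

Definition mvn_equiv m n (x : 'M[R]_m) (y : 'M[R]_n) :=
  exists (a : 'M[R]_(m, n)) (b : 'M[R]_(n, m)), a *m b = x /\ b *m a = y.

Lemma idem_diag2_mx m n (x : 'M[R]_m) (y : 'M[R]_n) :
  idem_mx x -> idem_mx y -> idem_mx (diag2_mx x y).
Proof.
by move=> hx hy; rewrite /idem_mx mulmx_block !mulmx0 !mul0mx !addr0 !add0r hx hy.
Qed.

Lemma mvn_equiv_sym m n (x : 'M[R]_m) (y : 'M[R]_n) : mvn_equiv x y -> mvn_equiv y x.
Proof. by case=> a [b [ab ba]]; exists b, a. Qed.

Lemma mvn_equiv_trans m n k (x : 'M[R]_m) (y : 'M[R]_n) (z : 'M[R]_k) :
  idem_mx x -> idem_mx z -> mvn_equiv x y -> mvn_equiv y z -> mvn_equiv x z.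
Proof.
move=> hx hz [a [b [ab ba]]] [c [d [cd dc]]].
exists (a *m c), (d *m b); split.
  by rewrite mulmxA -(mulmxA a) cd -ba !mulmxA ab -mulmxA ab hx.
by rewrite mulmxA -(mulmxA d) ba -cd !mulmxA dc -mulmxA dc hz.
Qed.

Lemma mvn_equiv_diag2r m n k (z : 'M[R]_k) (x : 'M[R]_m) (y : 'M[R]_n) :
  idem_mx z -> mvn_equiv x y -> mvn_equiv (diag2_mx z x) (diag2_mx z y).
Proof.
move=> hz [a [b [ab ba]]]; exists (block_mx z 0 0 a), (block_mx z 0 0 b).
by rewrite !mulmx_block !mulmx0 !mul0mx !addr0 !add0r hz ab ba.
Qed.

Lemma mvn_equiv_diag2C m n (x : 'M[R]_m) (y : 'M[R]_n) :
  idem_mx x -> idem_mx y -> mvn_equiv (diag2_mx x y) (diag2_mx y x).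
Proof.
move=> hx hy; exists (block_mx 0 x y 0), (block_mx 0 y x 0).
by rewrite !mulmx_block !mulmx0 !mul0mx !addr0 !add0r hx hy.
Qed.

Local Notation sc n a := (a%:M : 'M[R]_n).

Definition box_mx n (x y : 'M[R]_n) : 'M[R]_n :=
  sc n b0 *m x *m sc n a0 + sc n b1 *m y *m sc n a1.

Lemma mvn_equiv_box n m (x y : 'M[R]_n) (z : 'M[R]_m) :
  idem_mx x -> idem_mx y -> idem_mx z ->
  mvn_equiv (diag2_mx x (diag2_mx y z)) (diag2_mx (box_mx x y) z).
Proof.
move=> hx hy hz.
have s00 : sc n a0 *m sc n b0 = 1%:M by rewrite -scalar_mxM a0b0.
have s11 : sc n a1 *m sc n b1 = 1%:M by rewrite -scalar_mxM a1b1.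
have s01 : sc n a0 *m sc n b1 = 0 by rewrite -scalar_mxM a0b1_eq0 raddf0.
have s10 : sc n a1 *m sc n b0 = 0 by rewrite -scalar_mxM a1b0_eq0 raddf0.
exists (col_mx (row_mx (x *m sc n a0) (0 : 'M_(n, m))) (diag2_mx (y *m sc n a1) z)).
exists (row_mx (col_mx (sc n b0 *m x) (0 : 'M_(m, n))) (diag2_mx (sc n b1 *m y) z)).
split.
  rewrite mul_col_row mul_row_col mul_row_block mul_block_col mulmx_block.
  rewrite !mulmx0 !mul0mx !addr0 !add0r.
  rewrite !mulmxA -!(mulmxA x) -!(mulmxA y) s00 s01 s10 s11.
  by rewrite !mul1mx !mul0mx !mulmx0 hx hy hz row_mx0 col_mx0.
rewrite mul_row_col mul_col_row mulmx_block.
rewrite !mulmx0 !mul0mx !addr0 !add0r add_block_mx !addr0 !add0r hz.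
by rewrite /box_mx !mulmxA -(mulmxA _ x x) hx -(mulmxA _ y y) hy.
Qed.

Lemma rep_mxM m n k (x : 'M[R]_(m, n)) (y : 'M[R]_(n, k)) :
  map_mx rep (x *m y) = map_mx rep x *m map_mx rep y.
Proof.
apply/matrixP => i j; rewrite !mxE (big_morph rep repD rep0).
by apply: eq_bigr => l _; rewrite repM !mxE.
Qed.

Lemma scalar_mx_conj n (a b : R) (x : 'M[R]_n) :
  a%:M *m x *m b%:M = map_mx (fun t => a * t * b) x.
Proof.
apply/matrixP => i j; rewrite mul_scalar_mx mxE (bigD1 j) //= big1 => [|k /negbTE nk].
  by rewrite !mxE eqxx mulr1n addr0.
by rewrite !mxE nk mulr0n mulr0.
Qed.

Lemma box_mx_rep n (x : 'M[R]_n) : box_mx x (map_mx rep x) = map_mx rep x.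
Proof. by apply/matrixP => i j; rewrite /box_mx !scalar_mx_conj !mxE rep_box. Qed.

Theorem stably_mvn_equiv_idem n m (e : 'M[R]_n) (f : 'M[R]_m) :
  idem_mx e -> idem_mx f ->
  exists k (g : 'M[R]_k), idem_mx g /\ mvn_equiv (diag2_mx e g) (diag2_mx f g).
Proof.
move=> he hf; set E := map_mx rep e; set F := map_mx rep f.
have hE : idem_mx E by rewrite /idem_mx -rep_mxM he.
have hF : idem_mx F by rewrite /idem_mx -rep_mxM hf.
exists (n + m)%N, (diag2_mx E F); split; first exact: idem_diag2_mx.
have eEF : mvn_equiv (diag2_mx e (diag2_mx E F)) (diag2_mx E F).
  by have := mvn_equiv_box he hE hF; rewrite box_mx_rep.
have fFE : mvn_equiv (diag2_mx f (diag2_mx F E)) (diag2_mx F E).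
  by have := mvn_equiv_box hf hF hE; rewrite box_mx_rep.
have hEF := idem_diag2_mx hE hF; have hFE := idem_diag2_mx hF hE.
have hfEF := idem_diag2_mx hf hEF.
apply: (mvn_equiv_trans (idem_diag2_mx he hEF) hfEF eEF).
apply: (mvn_equiv_trans hEF hfEF (mvn_equiv_diag2C hE hF)).
apply: (mvn_equiv_trans hFE hfEF (mvn_equiv_sym fFE)).
exact/mvn_equiv_diag2r/mvn_equiv_diag2C.
Qed.

End SwindleK0.

(** * p-adic numbers *)

Section PadicNumbers.
Variable p : nat.
Hypothesis p_gt1 : (1 < p)%N.
Local Notation Zp := (Defs.Zp p).
Local Notation Q := (Qp p).

Lemma expp_gt0 n : (0 < p ^ n)%N.
Proof. by rewrite expn_gt0 ltnW. Qed.

Lemma digit_lt (d : digit p) : (d < p)%N.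
Proof. by case: d => /= m; rewrite prednK // ltnW. Qed.

Lemma zval0 (x : Zp) : zval 0 x = 0%N.
Proof. by rewrite /zval big_ord0. Qed.

Lemma zvalS n (x : Zp) : zval n.+1 x = (zval n x + x n * p ^ n)%N.
Proof. by rewrite /zval big_ord_recr. Qed.

Lemma zval_lt n (x : Zp) : (zval n x < p ^ n)%N.
Proof.
elim: n => [|n IH]; first by rewrite zval0 expn0.
rewrite zvalS expnS; have := digit_lt (x n); have := expp_gt0 n.
move: IH; set P := p ^ n; set z := zval n x; set d := (x n : nat); nia.
Qed.

Lemma modn_zval n (x : Zp) : zval n x %% p ^ n = zval n x.
Proof. by rewrite modn_small // zval_lt. Qed.

Lemma zval_mod n m (x : Zp) : (n <= m)%N -> zval m x %% p ^ n = zval n x.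
Proof.
elim: m => [|m IH]; first by rewrite leqn0 => /eqP ->; rewrite zval0.
rewrite leq_eqVlt => /orP [/eqP -> | ]; first exact: modn_zval.
rewrite ltnS => hnm; rewrite zvalS -modnDm -(subnK hnm) expnD mulnA modnMl addn0.
by rewrite modn_mod subnK // IH.
Qed.

Lemma zval_ext (x y : Zp) : (forall n, zval n x = zval n y) -> x = y.
Proof.
move=> H; apply: funext => i; apply: val_inj => /=.
have := H i.+1; rewrite !zvalS H => /addnI /eqP.
by rewrite eqn_pmul2r ?expp_gt0 // => /eqP.
Qed.

Lemma modn_mul_decomp m P q : m %% (q * P) = (m %% P + (m %/ P %% q) * P)%N.
Proof.
rewrite modn_divl; set r := m %% (q * P).
have -> : m %% P = r %% P by rewrite /r modn_dvdm // dvdn_mull.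
by rewrite addnC -divn_eq.
Qed.

Lemma zval_of_res (f : nat -> nat) :
  (forall n, f n.+1 = f n %[mod p ^ n]) ->
  forall n, zval n (zp_of_res p f) = f n %% p ^ n.
Proof.
move=> H; elim=> [|n IH]; first by rewrite zval0 expn0 modn1.
rewrite zvalS IH /zp_of_res inordK; last by rewrite prednK ?ltn_pmod // ltnW.
by rewrite -H expnS modn_mul_decomp; congr (_ + _); apply: mulnC.
Qed.

Lemma zval_add n (x y : Zp) : zval n (zp_add x y) = (zval n x + zval n y) %% p ^ n.
Proof.
by rewrite zval_of_res // => m; rewrite -[LHS]modnDm -[RHS]modnDm !zval_mod.
Qed.

Lemma zval_mul n (x y : Zp) : zval n (zp_mul x y) = (zval n x * zval n y) %% p ^ n.
Proof.
by rewrite zval_of_res // => m; rewrite -[LHS]modnMm -[RHS]modnMm !zval_mod.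
Qed.

Lemma zval_pmul j n (x : Zp) : zval n (zp_pmul j x) = (p ^ j * zval n x) %% p ^ n.
Proof.
by rewrite zval_of_res // => m; rewrite -[LHS]modnMmr -[RHS]modnMmr !zval_mod.
Qed.

Lemma zval_opp n (x : Zp) : zval n (zp_opp x) = (p ^ n - zval n x) %% p ^ n.
Proof.
rewrite zval_of_res // => m; apply/eqP.
have h1 : (zval m.+1 x <= p ^ m.+1)%N by apply/ltnW/zval_lt.
have h2 : (zval m x <= p ^ m)%N by apply/ltnW/zval_lt.
rewrite -(eqn_modDr (zval m.+1 x)) subnK // -modnDmr zval_mod // subnK //.
by rewrite expnS modnMl modnn.
Qed.

Lemma zval_zp0 n : zval n (zp0 p) = 0%N.
Proof. by rewrite /zval big1. Qed.

Lemma zp_addA (x y z : Zp) : zp_add x (zp_add y z) = zp_add (zp_add x y) z.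
Proof. by apply: zval_ext => n; rewrite !zval_add modnDmr modnDml addnA. Qed.

Lemma zp_addC (x y : Zp) : zp_add x y = zp_add y x.
Proof. by apply: zval_ext => n; rewrite !zval_add addnC. Qed.

Lemma zp_add0 (x : Zp) : zp_add (zp0 p) x = x.
Proof. by apply: zval_ext => n; rewrite zval_add zval_zp0 modn_zval. Qed.

Lemma zp_addN (x : Zp) : zp_add (zp_opp x) x = zp0 p.
Proof.
apply: zval_ext => n; rewrite zval_add zval_opp zval_zp0 modnDml subnK ?modnn //.
exact/ltnW/zval_lt.
Qed.

Lemma zp_add_eq0 (a b : Zp) : zp_add a b = zp0 p -> a = zp_opp b.
Proof.
move=> h; rewrite -[a]zp_add0 -(zp_addN b) -zp_addA (zp_addC b) h.
by rewrite zp_addC zp_add0.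
Qed.

Lemma zp_mulDr (a x y : Zp) : zp_mul a (zp_add x y) = zp_add (zp_mul a x) (zp_mul a y).
Proof.
by apply: zval_ext => n; rewrite !(zval_mul, zval_add) modnMmr modnDm mulnDr.
Qed.

Lemma zp_mul0 (a : Zp) : zp_mul a (zp0 p) = zp0 p.
Proof. by apply: zval_ext => n; rewrite zval_mul !zval_zp0 muln0 mod0n. Qed.

Lemma zp_pmulD j (x y : Zp) : zp_pmul j (zp_add x y) = zp_add (zp_pmul j x) (zp_pmul j y).
Proof.
by apply: zval_ext => n; rewrite !(zval_pmul, zval_add) modnMmr modnDm mulnDr.
Qed.

Lemma zp_pmul_mul j (a x : Zp) : zp_pmul j (zp_mul a x) = zp_mul a (zp_pmul j x).
Proof.
by apply: zval_ext => n; rewrite !(zval_pmul, zval_mul) !modnMmr mulnCA.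
Qed.

Lemma zp_pmul_pmul i j (x : Zp) : zp_pmul i (zp_pmul j x) = zp_pmul (i + j) x.
Proof. by apply: zval_ext => n; rewrite !zval_pmul modnMmr mulnA expnD. Qed.

Lemma zp_pmul0 j : zp_pmul j (zp0 p) = zp0 p.
Proof. by apply: zval_ext => n; rewrite zval_pmul !zval_zp0 muln0 mod0n. Qed.

Lemma zp_pmulN j (x : Zp) : zp_pmul j (zp_opp x) = zp_opp (zp_pmul j x).
Proof. by apply: zp_add_eq0; rewrite -zp_pmulD zp_addN zp_pmul0. Qed.

Lemma zval_eq0P n (z : Zp) : reflect (forall i, (i < n)%N -> z i = ord0) (zval n z == 0%N).
Proof.
apply: (iffP eqP) => [h i hi | h]; last by rewrite /zval big1 // => i _; rewrite h.
apply: val_inj => /=; have := zval_mod z hi; rewrite h mod0n zvalS => /eqP.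
have hP : (p ^ i != 0)%N by rewrite -lt0n expp_gt0.
by rewrite eq_sym addn_eq0 muln_eq0 (negbTE hP) orbF => /andP [_ /eqP].
Qed.

Lemma zp_pmul_digit j (x : Zp) i :
  zp_pmul j x i = if (i < j)%N then ord0 else x (i - j)%N.
Proof.
pose w : Zp := fun i => if (i < j)%N then ord0 else x (i - j)%N.
suff -> : zp_pmul j x = w by [].
have w_low k : (k <= j)%N -> zval k w = 0%N.
  by move=> hk; apply/eqP/zval_eq0P => i0 hi0; rewrite /w (leq_trans hi0 hk).
have w_high k : zval (j + k) w = (p ^ j * zval k x)%N.
  elim: k => [|k IH]; first by rewrite addn0 zval0 muln0 w_low.
  rewrite addnS zvalS IH zvalS /w ltnNge leq_addr /= addKn expnD; ring.
apply: zval_ext => n; rewrite zval_pmul.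
case: (leqP j n) => hjn.
  rewrite -(subnK hjn) addnC w_high expnD -muln_modr.
  by rewrite zval_mod // leq_addl.
by rewrite w_low ?(ltnW hjn) // -(subnK (ltnW hjn)) expnD mulnAC modnMl.
Qed.

(* [qval N x] is p^N x, a p-adic integer as soon as p^N clears the denominator of x. *)
Definition qval N (x : Q) : Zp := zp_pmul (N - qk x) (qz x).

Lemma qval_digit N x i :
  qval N x i = if (i < N - qk x)%N then ord0 else qz x (i - (N - qk x)).
Proof. exact: zp_pmul_digit. Qed.

Lemma Qp_ext (x y : Q) : qk x = qk y -> qz x = qz y -> x = y.
Proof.
case: x => kx zx hx; case: y => ky zy hy /= hk hz; subst.
by rewrite (bool_irrelevance hx hy).
Qed.

Lemma qval_inj N (x y : Q) :
  (qk x <= N)%N -> (qk y <= N)%N -> qval N x = qval N y -> x = y.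
Proof.
wlog hxy : x y / (qk x <= qk y)%N.
  move=> W hx hy e; case: (leqP (qk x) (qk y)) => h; first exact: W.
  by symmetry; apply: W => //; apply: ltnW.
move=> hx hy e; case: (ltnP (qk x) (qk y)) => h.
  have hy0 : qz y 0 != ord0.
    by case/orP: (qok y) => // /eqP hk; move: h; rewrite hk.
  have := congr1 (fun f => f (N - qk y)%N) e => /=.
  rewrite !qval_digit ltnn subnn.
  have -> : (N - qk y < N - qk x)%N by lia.
  by move=> e'; rewrite -e' eqxx in hy0.
have hk : qk x = qk y by apply/eqP; rewrite eqn_leq hxy h.
apply: Qp_ext => //; apply: funext => i.
have := congr1 (fun f => f (i + (N - qk x))%N) e => /=.
by rewrite !qval_digit -hk ltnNge leq_addl /= addnK.
Qed.

Lemma lowdeg_le K (z : Zp) : (lowdeg K z <= K)%N.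
Proof.
by rewrite /lowdeg; have := find_size (fun i => z i != ord0) (iota 0 K); rewrite size_iota.
Qed.

Lemma lowdeg_digit K (z : Zp) i : (i < lowdeg K z)%N -> z i = ord0.
Proof.
move=> h; have := @before_find _ 0%N (fun i => z i != ord0) (iota 0 K) i h.
rewrite nth_iota ?add0n; first by move/negbFE/eqP.
exact: leq_trans h (lowdeg_le K z).
Qed.

Lemma qk_normalize K (z : Zp) : (qk (normalize K z) <= K)%N.
Proof. exact: leq_subr. Qed.

Lemma qval_normalize K (z : Zp) : qval K (normalize K z) = z.
Proof.
rewrite /qval /= subKn ?lowdeg_le //; apply: funext => i.
rewrite zp_pmul_digit /zp_shift.
by case: ifP => h; [rewrite (lowdeg_digit h) | rewrite subnK // leqNgt h].
Qed.

Lemma qval_up N M x :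
  (qk x <= N)%N -> (N <= M)%N -> qval M x = zp_pmul (M - N) (qval N x).
Proof. by move=> h1 h2; rewrite /qval zp_pmul_pmul; congr zp_pmul; lia. Qed.

Lemma qval_add N x y : (qk x <= N)%N -> (qk y <= N)%N ->
  qval N (qadd x y) = zp_add (qval N x) (qval N y).
Proof.
move=> hx hy; set K := maxn (qk x) (qk y).
have hK : (K <= N)%N by rewrite geq_max hx hy.
change (qval N (normalize K (zp_add (qval K x) (qval K y))) = zp_add (qval N x) (qval N y)).
rewrite (qval_up (N:=K)) ?qk_normalize // qval_normalize zp_pmulD.
by rewrite -!qval_up // ?leq_maxr ?leq_maxl.
Qed.

Lemma qval_opp N x : (qk x <= N)%N -> qval N (qopp x) = zp_opp (qval N x).
Proof.
move=> hx; change (qval N (normalize (qk x) (zp_opp (qz x))) = zp_opp (qval N x)).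
by rewrite (qval_up (N:=qk x)) ?qk_normalize // qval_normalize zp_pmulN.
Qed.

Lemma qval_scale N a x : (qk x <= N)%N -> qval N (qscale a x) = zp_mul a (qval N x).
Proof.
move=> hx; change (qval N (normalize (qk x) (zp_mul a (qz x))) = zp_mul a (qval N x)).
by rewrite (qval_up (N:=qk x)) ?qk_normalize // qval_normalize zp_pmul_mul.
Qed.

Lemma qk_q0 : qk (q0 p) = 0%N.
Proof. by rewrite /q0 /= sub0n. Qed.

Lemma qval_q0 N : qval N (q0 p) = zp0 p.
Proof. exact: zp_pmul0. Qed.

Lemma qk_add_le N (x y : Q) : (qk x <= N)%N -> (qk y <= N)%N -> (qk (qadd x y) <= N)%N.
Proof. by move=> hx hy; apply: leq_trans (qk_normalize _ _) _; rewrite geq_max hx hy. Qed.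

Lemma qk_opp_le N (x : Q) : (qk x <= N)%N -> (qk (qopp x) <= N)%N.
Proof. by move=> hx; apply: leq_trans (qk_normalize _ _) _. Qed.

Lemma qk_scale_le N a (x : Q) : (qk x <= N)%N -> (qk (qscale a x) <= N)%N.
Proof. by move=> hx; apply: leq_trans (qk_normalize _ _) _. Qed.

Lemma qk_q0_le N : (qk (q0 p) <= N)%N.
Proof. by rewrite qk_q0. Qed.

Ltac qk_bound := repeat match goal with
  | |- is_true (qk (qadd _ _) <= _)%N => apply: qk_add_le
  | |- is_true (qk (qopp _) <= _)%N => apply: qk_opp_le
  | |- is_true (qk (qscale _ _) <= _)%N => apply: qk_scale_le
  | |- is_true (qk (q0 _) <= _)%N => apply: qk_q0_le
  end; lia.

Lemma qaddA (x y z : Q) : qadd x (qadd y z) = qadd (qadd x y) z.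
Proof.
apply: (@qval_inj (maxn (qk x) (maxn (qk y) (qk z)))); try qk_bound.
rewrite !qval_add; try qk_bound.
exact: zp_addA.
Qed.

Lemma qaddC (x y : Q) : qadd x y = qadd y x.
Proof.
apply: (@qval_inj (maxn (qk x) (qk y))); try qk_bound.
rewrite !qval_add; try qk_bound.
exact: zp_addC.
Qed.

Lemma qadd0 (x : Q) : qadd (q0 p) x = x.
Proof.
apply: (@qval_inj (qk x)); try qk_bound.
rewrite qval_add; try qk_bound.
by rewrite qval_q0 zp_add0.
Qed.

Lemma qaddN (x : Q) : qadd (qopp x) x = q0 p.
Proof.
apply: (@qval_inj (qk x)); try qk_bound.
rewrite qval_add; try qk_bound.
by rewrite qval_opp // qval_q0 zp_addN.
Qed.

HB.instance Definition _ := gen_eqMixin Q.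
HB.instance Definition _ := gen_choiceMixin Q.
HB.instance Definition _ := GRing.isZmodule.Build Q qaddA qaddC qadd0 qaddN.

Lemma qscaleD a (x y : Q) : qscale a (qadd x y) = qadd (qscale a x) (qscale a y).
Proof.
apply: (@qval_inj (maxn (qk x) (qk y))); try qk_bound.
rewrite qval_scale; try qk_bound.
rewrite !qval_add; try qk_bound.
by rewrite !qval_scale; try qk_bound; rewrite zp_mulDr.
Qed.

Lemma qscale0 a : qscale a (q0 p) = q0 p.
Proof.
apply: (@qval_inj 0); try qk_bound.
by rewrite qval_scale ?qval_q0 ?zp_mul0.
Qed.

Lemma qscaleN a (x : Q) : qscale a (- x)%R = (- qscale a x)%R.
Proof.
have e : qadd (qscale a (qopp x)) (qscale a x) = q0 p by rewrite -qscaleD qaddN qscale0.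
by apply/eqP; rewrite -addr_eq0; apply/eqP; exact: e.
Qed.

Lemma in_pnZpP n (x : Q) :
  in_pnZp n x <-> qk x = 0%N /\ zval n (qval 0 x) = 0%N.
Proof.
rewrite /in_pnZp; split.
  case/andP => /eqP hk /forallP h; split => //; apply/eqP/zval_eq0P => i hi.
  by rewrite qval_digit hk /= !subn0; apply/eqP; apply: (h (Ordinal hi)).
case=> hk /eqP/zval_eq0P hz; rewrite hk eqxx /=; apply/forallP => i.
by have := hz i (ltn_ord i); rewrite qval_digit hk /= !subn0 => ->.
Qed.

Lemma in_pnZpD n (x y : Q) : in_pnZp n x -> in_pnZp n y -> in_pnZp n (x + y)%R.
Proof.
move=> /in_pnZpP [hx zx] /in_pnZpP [hy zy]; apply/in_pnZpP.
have hk : qk (qadd x y) = 0%N by apply/eqP; rewrite -leqn0; qk_bound.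
by split => //; rewrite qval_add ?hx ?hy // zval_add zx zy mod0n.
Qed.

Lemma in_pnZpN n (x : Q) : in_pnZp n x -> in_pnZp n (- x)%R.
Proof.
move=> /in_pnZpP [hx zx]; apply/in_pnZpP.
have hk : qk (qopp x) = 0%N by apply/eqP; rewrite -leqn0; qk_bound.
by split => //; rewrite qval_opp ?hx // zval_opp zx subn0 modnn.
Qed.

Lemma in_pnZp0 n : in_pnZp n 0%R.
Proof. by apply/in_pnZpP; rewrite qk_q0 qval_q0 zval_zp0. Qed.

Lemma in_pnZpW m n (x : Q) : (m <= n)%N -> in_pnZp n x -> in_pnZp m x.
Proof.
move=> hmn /andP [hk /forallP h]; rewrite /in_pnZp hk /=; apply/forallP => i.
exact: (h (widen_ord hmn i)).
Qed.

Lemma in_pnZp_inZp n (x : Q) : in_pnZp n x -> inZp x.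
Proof. by case/andP. Qed.

Lemma inZp0 : inZp (0%R : Q).
Proof. by rewrite /inZp qk_q0. Qed.

Lemma inZpB (x y : Q) : inZp (x - y)%R -> inZp y -> inZp x.
Proof. by move=> h1 h2; rewrite -(subrK y x); apply: inZp_qadd. Qed.

Lemma inZpN (x : Q) : inZp (- x)%R = inZp x.
Proof. by apply/idP/idP => h; [rewrite -(opprK x) |]; apply: inZp_qopp. Qed.

(** * The ring of contractions of Q_p(X) *)

Section Operators.
Variable X : eqType.
Local Notation V := (QpX p X).

Lemma QpX_ext (x y : V) : (forall i, sval x i = sval y i) -> x = y.
Proof.
case: x => x hx; case: y => y hy /= h.
have e : x = y by apply: funext.
by subst; congr exist; apply: Prop_irrelevance.
Qed.

Lemma vaddA (x y z : V) : vadd x (vadd y z) = vadd (vadd x y) z.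
Proof. by apply: QpX_ext => i /=; apply: qaddA. Qed.

Lemma vaddC (x y : V) : vadd x y = vadd y x.
Proof. by apply: QpX_ext => i /=; apply: qaddC. Qed.

Lemma vadd0 (x : V) : vadd (v0 p X) x = x.
Proof. by apply: QpX_ext => i /=; apply: qadd0. Qed.

Lemma vaddN (x : V) : vadd (vopp x) x = v0 p X.
Proof. by apply: QpX_ext => i /=; apply: qaddN. Qed.

HB.instance Definition _ := gen_eqMixin V.
HB.instance Definition _ := gen_choiceMixin V.
HB.instance Definition _ := GRing.isZmodule.Build V vaddA vaddC vadd0 vaddN.

Lemma svalD (x y : V) i : sval (x + y)%R i = (sval x i + sval y i)%R.
Proof. by []. Qed.

Lemma svalN (x : V) i : sval (- x)%R i = (- sval x i)%R.
Proof. by []. Qed.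

Lemma vscaleD a (x y : V) : vscale a (x + y)%R = (vscale a x + vscale a y)%R.
Proof. by apply: QpX_ext => i /=; apply: qscaleD. Qed.

Lemma vscale0 a : vscale a 0%R = 0%R.
Proof. by apply: QpX_ext => i /=; apply: qscale0. Qed.

Lemma vscaleN a (x : V) : vscale a (- x)%R = (- vscale a x)%R.
Proof. by apply: QpX_ext => i /=; apply: qscaleN. Qed.

Lemma Zp_linearD (T : V -> V) : Zp_linear T -> {morph T : x y / (x + y)%R}.
Proof. by case. Qed.

Lemma Zp_linearZ (T : V -> V) : Zp_linear T -> forall a x, T (vscale a x) = vscale a (T x).
Proof. by case. Qed.

Lemma Zp_linear_add (T S : V -> V) : Zp_linear T -> Zp_linear S -> Zp_linear (opadd T S).
Proof.
move=> hT hS; split => [x y|a x]; rewrite /opadd.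
  by rewrite (Zp_linearD hT) (Zp_linearD hS); exact: addrACA.
by rewrite (Zp_linearZ hT) (Zp_linearZ hS); exact: (esym (vscaleD _ _ _)).
Qed.

Lemma Zp_linear_mul (T S : V -> V) : Zp_linear T -> Zp_linear S -> Zp_linear (opmul T S).
Proof.
move=> hT hS; split => [x y|a x]; rewrite /opmul.
  by rewrite (Zp_linearD hS) (Zp_linearD hT).
by rewrite (Zp_linearZ hS) (Zp_linearZ hT).
Qed.

Definition opopp (T : V -> V) : V -> V := fun x => vopp (T x).

Lemma Zp_linear_opp (T : V -> V) : Zp_linear T -> Zp_linear (opopp T).
Proof.
move=> hT; split => [x y|a x]; rewrite /opopp.
  by rewrite (Zp_linearD hT); exact: opprD.
by rewrite (Zp_linearZ hT); exact: (esym (vscaleN _ _)).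
Qed.

Lemma Zp_linear0 : Zp_linear (@op0 p X).
Proof.
by split => [x y|a x]; rewrite /op0; [exact: (esym (addr0 _)) | exact: (esym (vscale0 _))].
Qed.

Definition close (F : seq X) n (y x : V) : Prop :=
  forall i, i \in F -> in_pnZp n (sval y i - sval x i)%R.

(* Continuity of [T] at every point of every [E_s], with respect to the
   product topology on [E_s] and the topology [tau] on the target. *)
Definition EP_continuous (T : V -> V) : Prop :=
  forall s x, inEP s x -> forall t, inEP t (T x) -> forall F n,
    exists F' n', forall y, inEP s y -> close F' n' y x ->
      inEP t (T y) /\ close F n (T y) (T x).

Lemma close_refl F n (x : V) : close F n x x.
Proof. by move=> i _; rewrite subrr; apply: in_pnZp0. Qed.

Lemma closeW F F' n n' (y x : V) :
  {subset F <= F'} -> (n <= n')%N -> close F' n' y x -> close F n y x.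
Proof. by move=> hF hn h i hi; apply: in_pnZpW hn _; apply/h/hF. Qed.

Lemma inEP_sub s s' (x : V) : {subset s <= s'} -> inEP s x -> inEP s' x.
Proof. by move=> hs h j hj; apply: h; apply: contra hj; apply: hs. Qed.

Lemma exists_inEP (x : V) : exists s, inEP s x.
Proof.
by case: (svalP x) => s hs; exists s => j hj; apply/negPn; apply: contra hj; exact: hs.
Qed.

Lemma tau_open_nbhd t F n (c : V) : tau_open (fun v => inEP t v /\ close F n v c).
Proof.
move=> r v hv [hvt hvc]; exists (F ++ r), n => y hy hc; split.
  move=> j hj; case: (boolP (j \in r)) => hjr; last exact: hy.
  apply: (inZpB (y := sval v j)); last exact: hvt.
  by apply: (in_pnZp_inZp (n := n)); apply: hc; rewrite mem_cat hjr orbT.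
move=> i hi; rewrite -(subrKA (sval v i)); apply: in_pnZpD; last exact: hvc.
by apply: hc; rewrite mem_cat hi.
Qed.

Lemma tau_continuousP (T : V -> V) : tau_continuous T <-> EP_continuous T.
Proof.
split=> [hT s x hx t ht F n | hT A hA s x hx hAx].
  have := hT _ (@tau_open_nbhd t F n (T x)) s x hx (conj ht (@close_refl F n (T x))).
  by case=> F' [n' h]; exists F', n'.
case: (exists_inEP (T x)) => t ht.
case: (hA t (T x) ht hAx) => F [n hF].
case: (hT s x hx t ht F n) => F' [n' h].
by exists F', n' => y hy hc; case: (h y hy hc) => h1 h2; exact: hF.
Qed.

Lemma inEPN s (x : V) : inEP s (- x)%R -> inEP s x.
Proof. by move=> h j /h; rewrite svalN inZpN. Qed.

Lemma EP_continuous_add (T S : V -> V) :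
  EP_continuous T -> EP_continuous S -> EP_continuous (fun x => T x + S x)%R.
Proof.
move=> hT hS s x hx t ht F n.
have [tT htT] := exists_inEP (T x); have [tS htS] := exists_inEP (S x).
set G := F ++ tT ++ tS.
have [F1 [n1 h1]] := hT s x hx tT htT G n.
have [F2 [n2 h2]] := hS s x hx tS htS G n.
exists (F1 ++ F2), (maxn n1 n2) => y hy hc.
have [e1 d1] : inEP tT (T y) /\ close G n (T y) (T x).
  by apply: h1 hy _; apply: closeW hc => [i hi|]; rewrite ?mem_cat ?hi ?leq_maxl.
have [e2 d2] : inEP tS (S y) /\ close G n (S y) (S x).
  by apply: h2 hy _; apply: closeW hc => [i hi|]; rewrite ?mem_cat ?hi ?orbT ?leq_maxr.
have dG : close G n (T y + S y)%R (T x + S x)%R.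
  by move=> i hi; rewrite !svalD opprD addrACA; apply: in_pnZpD; [exact: d1 | exact: d2].
split; last by apply: closeW dG => // i hi; rewrite mem_cat hi.
move=> j hj; case: (boolP (j \in tT ++ tS)) => hjt.
  apply: (inZpB (y := sval (T x + S x)%R j)); last exact: ht.
  by apply: (in_pnZp_inZp (n := n)); apply: dG; rewrite mem_cat hjt orbT.
rewrite mem_cat negb_or in hjt; case/andP: hjt => j1 j2.
by rewrite svalD; apply: inZp_qadd; [exact: e1 | exact: e2].
Qed.

Lemma EP_continuous_opp (T : V -> V) :
  EP_continuous T -> EP_continuous (fun x => - T x)%R.
Proof.
move=> hT s x hx t /inEPN ht F n; have [F' [n' h]] := hT s x hx t ht F n.
exists F', n' => y hy hc; have [h1 h2] := h y hy hc; split.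
  by move=> j /h1; rewrite svalN inZpN.
by move=> i /h2; rewrite !svalN -opprD; apply: in_pnZpN.
Qed.

Lemma inB1_add (T S : V -> V) : inB1 T -> inB1 S -> inB1 (opadd T S).
Proof.
move=> [[lT /tau_continuousP cT] nT] [[lS /tau_continuousP cS] nS].
split; first split.
- exact: Zp_linear_add.
- exact/tau_continuousP/EP_continuous_add.
- by move=> x hx i; apply: inZp_qadd; [exact: nT | exact: nS].
Qed.

Lemma inB1_opp (T : V -> V) : inB1 T -> inB1 (opopp T).
Proof.
move=> [[lT /tau_continuousP cT] nT]; split; first split.
- exact: Zp_linear_opp.
- exact/tau_continuousP/EP_continuous_opp.
- by move=> x hx i; apply: inZp_qopp; exact: nT.
Qed.

Lemma inB1_mul (T S : V -> V) : inB1 T -> inB1 S -> inB1 (opmul T S).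
Proof.
move=> [[lT cT] nT] [[lS cS] nS]; split; first split.
- exact: Zp_linear_mul.
- by move=> A /cT /cS.
- by move=> x /nS /nT.
Qed.

Lemma inB1_0 : inB1 (@op0 p X).
Proof.
split; first split.
- exact: Zp_linear0.
- by move=> A hA s x hx hAx; exists [::], 0%N.
- by move=> x hx i; apply: inZp0.
Qed.

Lemma inB1_1 : inB1 (@op1 p X).
Proof. by split; first split => // A. Qed.

Record B1op := MkB1op { bfun : V -> V; bfunP : inB1 bfun }.

Lemma B1op_ext (T S : B1op) : bfun T = bfun S -> T = S.
Proof.
case: T => T hT; case: S => S hS /= e; subst.
by congr MkB1op; apply: Prop_irrelevance.
Qed.

Definition B1op_add T S := MkB1op (inB1_add (bfunP T) (bfunP S)).
Definition B1op_opp T := MkB1op (inB1_opp (bfunP T)).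
Definition B1op_zero := MkB1op inB1_0.
Definition B1op_mul T S := MkB1op (inB1_mul (bfunP T) (bfunP S)).
Definition B1op_one := MkB1op inB1_1.

Lemma B1op_addA : associative B1op_add.
Proof. by move=> T S U; apply/B1op_ext/funext => x; apply: addrA. Qed.

Lemma B1op_addC : commutative B1op_add.
Proof. by move=> T S; apply/B1op_ext/funext => x; apply: addrC. Qed.

Lemma B1op_add0 : left_id B1op_zero B1op_add.
Proof. by move=> T; apply/B1op_ext/funext => x; apply: add0r. Qed.

Lemma B1op_addN : left_inverse B1op_zero B1op_opp B1op_add.
Proof. by move=> T; apply/B1op_ext/funext => x; apply: addNr. Qed.

HB.instance Definition _ := gen_eqMixin B1op.
HB.instance Definition _ := gen_choiceMixin B1op.
HB.instance Definition _ :=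
  GRing.isZmodule.Build B1op B1op_addA B1op_addC B1op_add0 B1op_addN.

Lemma B1op_mulA : associative B1op_mul.
Proof. by move=> T S U; apply: B1op_ext. Qed.

Lemma B1op_mul1 : left_id B1op_one B1op_mul.
Proof. by move=> T; apply: B1op_ext. Qed.

Lemma B1op_mulr1 : right_id B1op_one B1op_mul.
Proof. by move=> T; apply: B1op_ext. Qed.

Lemma B1op_mulDl : left_distributive B1op_mul (@GRing.add B1op).
Proof. by move=> T S U; apply: B1op_ext. Qed.

Lemma B1op_mulDr : right_distributive B1op_mul (@GRing.add B1op).
Proof.
move=> T S U; apply/B1op_ext/funext => x /=.
by rewrite /opmul /opadd (Zp_linearD (proj1 (proj1 (bfunP T)))).
Qed.

HB.instance Definition _ :=
  GRing.Zmodule_isPzRing.Build B1op B1op_mulA B1op_mul1 B1op_mulr1 B1op_mulDl B1op_mulDr.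

Lemma bfunD (a b : B1op) v : bfun (a + b)%R v = (bfun a v + bfun b v)%R.
Proof. by []. Qed.

Lemma bfunM (a b : B1op) v : bfun (a * b)%R v = bfun a (bfun b v).
Proof. by []. Qed.

Lemma bfun_mx_mul m n k (A : 'M[B1op]_(m, n)) (B : 'M[B1op]_(n, k)) :
  map_mx bfun (A *m B)%R = mx_mul (map_mx bfun A) (map_mx bfun B).
Proof.
apply/matrixP => i j; rewrite /mx_mul !mxE [index_enum _]unlock -enumT.
elim: (enum 'I_n) => [|l r IH]; first by rewrite big_nil.
by rewrite big_cons /= IH !mxE.
Qed.

Lemma bfun_mx_diag2 m n (x : 'M[B1op]_m) (y : 'M[B1op]_n) :
  map_mx bfun (diag2_mx x y) = mx_dsum (map_mx bfun x) (map_mx bfun y).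
Proof.
by rewrite map_block_mx; congr block_mx; apply/matrixP => i j; rewrite !mxE.
Qed.

Lemma bfun_mx_inj m n : injective (map_mx bfun : 'M[B1op]_(m, n) -> _).
Proof.
move=> A B e; apply/matrixP => i j; apply: B1op_ext.
by have := congr1 (fun M : opmx p X m n => M i j) e; rewrite !mxE.
Qed.

Lemma mx_inB1_bfun m n (A : 'M[B1op]_(m, n)) : mx_inB1 (map_mx bfun A).
Proof. by move=> i j; rewrite mxE; apply: bfunP. Qed.

Definition B1op_mx m n (A : opmx p X m n) (hA : mx_inB1 A) : 'M[B1op]_(m, n) :=
  \matrix_(i, j) MkB1op (hA i j).

Lemma bfun_B1op_mx m n (A : opmx p X m n) (hA : mx_inB1 A) :
  map_mx bfun (B1op_mx hA) = A.
Proof. by apply/matrixP => i j; rewrite !mxE. Qed.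

Lemma idem_B1op_mx n (e : opmx p X n n) (he : mx_inB1 e) :
  mx_idem e -> idem_mx (B1op_mx he).
Proof. by move=> idem_e; apply: bfun_mx_inj; rewrite bfun_mx_mul bfun_B1op_mx. Qed.

Lemma B1_K0_trivial_of_rep (a0 b0 a1 b1 : B1op) (rep : B1op -> B1op) :
  (a0 * b0 = 1 /\ a1 * b1 = 1 /\ b0 * a0 + b1 * a1 = 1)%R ->
  {morph rep : x y / (x + y)%R} -> {morph rep : x y / (x * y)%R} ->
  (forall x, b0 * x * a0 + b1 * rep x * a1 = rep x)%R ->
  B1_K0_trivial p X.
Proof.
move=> [h00 [h11 h]] repD repM rep_box n m e f he idem_e hf idem_f.
have [k [G [idem_G [a [b [ab ba]]]]]] := stably_mvn_equiv_idem h00 h11 h repD repM rep_box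
  (idem_B1op_mx he idem_e) (idem_B1op_mx hf idem_f).
exists k, (map_mx bfun G); split; first exact: mx_inB1_bfun.
split; first by rewrite /mx_idem -bfun_mx_mul idem_G.
exists (map_mx bfun a), (map_mx bfun b).
split; first exact: mx_inB1_bfun.
split; first exact: mx_inB1_bfun.
by split; rewrite -bfun_mx_mul ?ab ?ba bfun_mx_diag2 bfun_B1op_mx.
Qed.

Lemma B1_infinite_sum_ring_of_rep (a0 b0 a1 b1 : B1op) (rep : B1op -> B1op) :
  (a0 * b0 = 1 /\ a1 * b1 = 1 /\ b0 * a0 + b1 * a1 = 1)%R ->
  rep 1%R = 1%R -> {morph rep : x y / (x + y)%R} -> {morph rep : x y / (x * y)%R} ->
  (forall x, b0 * x * a0 + b1 * rep x * a1 = rep x)%R ->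
  B1_infinite_sum_ring p X.
Proof.
move=> [h00 [h11 h]] rep1 repD repM rep_box.
(* Off B_(1) the value of [inf] is irrelevant. *)
pose inf a := if pselect (inB1 a) is left ha then bfun (rep (MkB1op ha)) else a.
have infE a (ha : inB1 a) : inf a = bfun (rep (MkB1op ha)).
  by rewrite /inf; case: pselect => // ha'; congr (bfun (rep _)); apply: B1op_ext.
exists (bfun a0), (bfun b0), (bfun a1), (bfun b1).
split; first by split; apply: bfunP.
split; first by split; [exact: (congr1 bfun h00) | exact: (congr1 bfun h11) |
                        exact: (congr1 bfun h)].
exists inf; split; first by move=> a ha; rewrite (infE _ ha); apply: bfunP.
split; first by rewrite (infE _ inB1_1); exact: (congr1 bfun rep1).
split.
  move=> a b ha hb; rewrite (infE _ (inB1_add ha hb)) (infE _ ha) (infE _ hb).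
  exact: (congr1 bfun (repD (MkB1op ha) (MkB1op hb))).
split.
  move=> a b ha hb; rewrite (infE _ (inB1_mul ha hb)) (infE _ ha) (infE _ hb).
  exact: (congr1 bfun (repM (MkB1op ha) (MkB1op hb))).
by move=> a ha; rewrite (infE _ ha); exact: (congr1 bfun (rep_box (MkB1op ha))).
Qed.

Lemma Zp_linear_B1op (a : B1op) : Zp_linear (bfun a).
Proof. exact: (bfunP a).1.1. Qed.

Lemma EP_continuous_B1op (a : B1op) : EP_continuous (bfun a).
Proof. exact/tau_continuousP/(bfunP a).1.2. Qed.

Lemma opnorm_le1_B1op (a : B1op) : opnorm_le1 (bfun a).
Proof. exact: (bfunP a).2. Qed.

Lemma exists_common_nbhd (I : eqType) (P : I -> seq X -> nat -> Prop) (K : seq I) :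
  (forall k F F' n n', {subset F <= F'} -> (n <= n')%N -> P k F n -> P k F' n') ->
  (forall k, k \in K -> exists F n, P k F n) ->
  exists F n, forall k, k \in K -> P k F n.
Proof.
move=> mono; elim: K => [|k K IH] hex; first by exists [::], 0%N.
have [F [n hF]] : exists F n, forall k, k \in K -> P k F n.
  by apply: IH => k' hk'; apply: hex; rewrite in_cons hk' orbT.
have [F1 [n1 h1]] := hex k (mem_head k K).
exists (F ++ F1), (maxn n n1) => k'; rewrite in_cons => /predU1P [-> | hk].
  by apply: mono h1 => [i hi|]; rewrite ?mem_cat ?hi ?orbT ?leq_maxr.
by apply: mono (hF k' hk) => [i hi|]; rewrite ?mem_cat ?hi ?leq_maxl.
Qed.

(* [rho] inverts the partial map [tau] on its domain; this keeps supports finite. *)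
Section Reindex.
Variables (tau : X -> option X) (rho : X -> X).
Hypothesis tauK : forall x y, tau x = Some y -> x = rho y.

Definition reindex_fun (v : V) (x : X) : Q := if tau x is Some y then sval v y else 0%R.

Lemma reindex_finite (v : V) : isQpX (reindex_fun v).
Proof.
case: (svalP v) => s hs; exists (map rho s) => x; rewrite /reindex_fun.
case e: (tau x) => [y|]; last by rewrite inZp0.
by move=> hy; rewrite (tauK e); apply/map_f/hs.
Qed.

Definition reindex (v : V) : V := exist _ _ (reindex_finite v).

Lemma inB1_reindex : inB1 reindex.
Proof.
split; first split; first split.
- move=> x y; apply: QpX_ext => i /=; rewrite /reindex_fun.
  by case: (tau i) => //; rewrite qadd0.
- move=> a x; apply: QpX_ext => i /=; rewrite /reindex_fun.
  by case: (tau i) => //; rewrite qscale0.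
- apply/tau_continuousP => s x hx t ht F n.
  exists (pmap tau F ++ s), n => y hy hc; split.
    move=> j /ht; rewrite /= /reindex_fun; case e: (tau j) => [k|] // hk.
    case: (boolP (k \in s)) => hks; last exact: hy.
    apply: (inZpB (y := sval x k)) => //; apply: (in_pnZp_inZp (n := n)).
    by apply: hc; rewrite mem_cat hks orbT.
  move=> i hi; rewrite /= /reindex_fun; case e: (tau i) => [k|].
    by apply: hc; rewrite mem_cat mem_pmap -e map_f.
  by rewrite subrr; apply: in_pnZp0.
- by move=> x hx i; rewrite /= /reindex_fun; case: (tau i) => [k|]; [exact: hx | exact: inZp0].
Qed.

End Reindex.

(** * The infinite sum ring structure *)

Section InfiniteSumRing.
Variables (cell : nat -> X -> X) (blk : X -> nat) (pos : X -> X).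
Hypothesis blk_cell : forall k y, blk (cell k y) = k.
Hypothesis pos_cell : forall k y, pos (cell k y) = y.
Hypothesis cell_blk_pos : forall x, cell (blk x) (pos x) = x.

Definition block_idx k (y : X) : option X := Some (cell k y).
Definition insert0_idx (x : X) : option X := if blk x == 0%N then Some (pos x) else None.
Definition unshift_idx (x : X) : option X := Some (cell (blk x).+1 (pos x)).
Definition shift_idx (x : X) : option X :=
  if blk x == 0%N then None else Some (cell (blk x).-1 (pos x)).

Lemma block_idxK k x y : block_idx k x = Some y -> x = pos y.
Proof. by case=> <-; rewrite pos_cell. Qed.

Lemma insert0_idxK x y : insert0_idx x = Some y -> x = cell 0 y.
Proof. by rewrite /insert0_idx; case: eqP => // h0 [<-]; rewrite -h0 cell_blk_pos. Qed.

Lemma unshift_idxK x y : unshift_idx x = Some y -> x = cell (blk y).-1 (pos y).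
Proof. by case=> <-; rewrite blk_cell pos_cell cell_blk_pos. Qed.

Lemma shift_idxK x y : shift_idx x = Some y -> x = cell (blk y).+1 (pos y).
Proof.
rewrite /shift_idx; case: eqP => // h0 [<-].
by rewrite blk_cell pos_cell prednK ?cell_blk_pos // lt0n; apply/eqP.
Qed.

Definition block k := reindex (@block_idxK k).

Lemma blockE k v y : sval (block k v) y = sval v (cell k y).
Proof. by []. Qed.

Definition a0 := MkB1op (inB1_reindex (@block_idxK 0)).
Definition b0 := MkB1op (inB1_reindex insert0_idxK).
Definition a1 := MkB1op (inB1_reindex unshift_idxK).
Definition b1 := MkB1op (inB1_reindex shift_idxK).

Lemma a0E v y : sval (bfun a0 v) y = sval v (cell 0 y).
Proof. by []. Qed.

Lemma b0E v x : sval (bfun b0 v) x = if blk x == 0%N then sval v (pos x) else 0%R.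
Proof. by rewrite /= /reindex_fun /insert0_idx; case: eqP. Qed.

Lemma a1E v x : sval (bfun a1 v) x = sval v (cell (blk x).+1 (pos x)).
Proof. by []. Qed.

Lemma b1E v x :
  sval (bfun b1 v) x = if blk x == 0%N then 0%R else sval v (cell (blk x).-1 (pos x)).
Proof. by rewrite /= /reindex_fun /shift_idx; case: eqP. Qed.

Lemma a0b0 : (a0 * b0 = 1)%R.
Proof.
apply/B1op_ext/funext => v; apply: QpX_ext => x.
by rewrite bfunM a0E b0E blk_cell eqxx pos_cell.
Qed.

Lemma a1b1 : (a1 * b1 = 1)%R.
Proof.
apply/B1op_ext/funext => v; apply: QpX_ext => x.
by rewrite bfunM a1E b1E blk_cell pos_cell /= cell_blk_pos.
Qed.

Lemma b0a0_b1a1 : (b0 * a0 + b1 * a1 = 1)%R.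
Proof.
apply/B1op_ext/funext => v; apply: QpX_ext => x.
rewrite bfunD svalD !bfunM b0E b1E a0E a1E; case: eqP => h0.
  by rewrite addr0 -h0 cell_blk_pos.
by rewrite add0r blk_cell pos_cell prednK ?cell_blk_pos // lt0n; apply/eqP.
Qed.

Lemma inEP_block s (v : V) k : inEP s v -> inEP (map pos s) (block k v).
Proof.
move=> hv y hy; rewrite blockE; apply: hv; apply: contra hy => hs.
by rewrite -(pos_cell k y); apply: map_f.
Qed.

Lemma vnorm_block s (v : V) k : inEP s v -> k \notin map blk s -> vnorm_le1 (block k v).
Proof.
move=> hv hk y; rewrite blockE; apply: hv; apply: contra hk => hs.
by rewrite -(blk_cell k y); apply: map_f.
Qed.

Lemma close_block F n k (y x : V) :
  close [seq cell k z | z <- F] n y x -> close F n (block k y) (block k x).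
Proof. by move=> h i hi; apply/h/map_f. Qed.

Definition rep_fun (a : V -> V) (v : V) (x : X) : Q := sval (a (block (blk x) v)) (pos x).

Lemma rep_fun_finite (a : V -> V) : opnorm_le1 a -> forall v, isQpX (rep_fun a v).
Proof.
move=> na v; have [s hs] := exists_inEP v.
have [t [_ ht]] : exists t (n : nat), forall k, k \in map blk s -> inEP t (a (block k v)).
  apply: (@exists_common_nbhd _ (fun k t _ => inEP t (a (block k v)))).
    by move=> k F F' n n' sF _; apply: inEP_sub.
  by move=> k _; have [t ht] := exists_inEP (a (block k v)); exists t, 0%N.
exists [seq cell k y | k <- map blk s, y <- t] => x hx.
have hk : blk x \in map blk s.
  by apply: contraNT hx => hk; apply: na (vnorm_block hs hk) (pos x).
have hy : pos x \in t by apply/negPn; apply: contra hx; apply: ht.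
by rewrite -[x]cell_blk_pos; apply: allpairs_f.
Qed.

Definition rep_vec (a : B1op) (v : V) : V :=
  exist _ _ (rep_fun_finite (opnorm_le1_B1op a) v).

Lemma rep_vecE a v x : sval (rep_vec a v) x = sval (bfun a (block (blk x) v)) (pos x).
Proof. by []. Qed.

(* Away from the finitely many blocks met by a point of [E_s] (or by [F]), [a^oo]
   stays in the unit ball; on each of the remaining blocks it is as continuous as [a]. *)
Lemma EP_continuous_rep a : EP_continuous (rep_vec a).
Proof.
move=> s x hx t ht F n.
pose K := map blk s ++ map blk F.
pose tk k := [seq pos w | w <- t & blk w == k].
have htk k : inEP (tk k) (bfun a (block k x)).
  move=> y hy; have := ht (cell k y); rewrite rep_vecE blk_cell pos_cell; apply.
  apply: contra hy => hyt.
  by apply/mapP; exists (cell k y); rewrite ?mem_filter ?blk_cell ?eqxx ?pos_cell.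
have [F0 [n0 hF0]] : exists F0 n0, forall k, k \in K -> forall z, inEP (map pos s) z ->
    close F0 n0 z (block k x) ->
    inEP (tk k) (bfun a z) /\ close (map pos F) n (bfun a z) (bfun a (block k x)).
  apply: exists_common_nbhd => [k F1 F2 n1 n2 sF ln h z hz /(closeW sF ln)|k _].
    exact: h.
  exact: EP_continuous_B1op (inEP_block k hx) _ (htk k) _ _.
exists [seq cell k z | k <- K, z <- F0], n0 => y hy hc.
have hyk k : k \in K -> inEP (tk k) (bfun a (block k y)) /\
    close (map pos F) n (bfun a (block k y)) (bfun a (block k x)).
  move=> hk; apply: hF0 => //; first exact: inEP_block.
  apply: close_block; apply: closeW hc => // _ /mapP [w hw ->].
  exact: allpairs_f hk hw.
split=> z hz; rewrite ?rep_vecE.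
  case: (boolP (blk z \in map blk s)) => hk.
    have hK : blk z \in K by rewrite mem_cat hk.
    have [h _] := hyk _ hK; apply: h.
    apply: contra hz => /mapP [w]; rewrite mem_filter => /andP [/eqP hw wt] ep.
    by rewrite -(cell_blk_pos z) ep -hw cell_blk_pos.
  exact: opnorm_le1_B1op (vnorm_block hy hk) (pos z).
have hK : blk z \in K by rewrite mem_cat (map_f blk hz) orbT.
have [_ h] := hyk _ hK; exact: h (map_f pos hz).
Qed.

Lemma inB1_rep_vec a : inB1 (rep_vec a).
Proof.
have la := Zp_linear_B1op a.
have lb k : Zp_linear (block k) := (inB1_reindex (@block_idxK k)).1.1.
split; first split.
- split => [x y | c x]; apply: QpX_ext => z; rewrite /= /rep_fun.
    by rewrite (Zp_linearD (lb _)) (Zp_linearD la).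
  by rewrite (Zp_linearZ (lb _)) (Zp_linearZ la).
- exact/tau_continuousP/EP_continuous_rep.
- by move=> v hv z; apply: opnorm_le1_B1op => y; exact: hv.
Qed.

Definition rep a := MkB1op (inB1_rep_vec a).

Lemma block_rep k a v : block k (bfun (rep a) v) = bfun a (block k v).
Proof. by apply: QpX_ext => y; rewrite blockE rep_vecE blk_cell pos_cell. Qed.

Lemma block_a1 k v : block k (bfun a1 v) = block k.+1 v.
Proof. by apply: QpX_ext => y; rewrite !blockE a1E blk_cell pos_cell. Qed.

Lemma rep1 : rep 1%R = 1%R.
Proof.
by apply/B1op_ext/funext => v; apply: QpX_ext => x; rewrite rep_vecE blockE cell_blk_pos.
Qed.

Lemma repD : {morph rep : a b / (a + b)%R}.
Proof. by move=> a b; apply/B1op_ext/funext => v; apply: QpX_ext. Qed.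

Lemma repM : {morph rep : a b / (a * b)%R}.
Proof.
move=> a b; apply/B1op_ext/funext => v; apply: QpX_ext => x.
by rewrite bfunM !rep_vecE block_rep.
Qed.

Lemma rep_box a : (b0 * a * a0 + b1 * rep a * a1)%R = rep a.
Proof.
apply/B1op_ext/funext => v; apply: QpX_ext => x.
rewrite bfunD svalD !bfunM b0E b1E [RHS]rep_vecE; case: eqP => h0.
  by rewrite addr0 h0.
by rewrite add0r rep_vecE blk_cell pos_cell block_a1 prednK // lt0n; apply/eqP.
Qed.

Lemma B1_infinite_sum_ring_holds : B1_infinite_sum_ring p X.
Proof.
exact: B1_infinite_sum_ring_of_rep (conj a0b0 (conj a1b1 b0a0_b1a1)) rep1 repD repM rep_box.
Qed.

Lemma B1_K0_trivial_holds : B1_K0_trivial p X.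
Proof.
exact: B1_K0_trivial_of_rep (conj a0b0 (conj a1b1 b0a0_b1a1)) repD repM rep_box.
Qed.

End InfiniteSumRing.
End Operators.
End PadicNumbers.

Lemma nat_prod_decomposition (X : Type) : (exists f : X -> nat, bijective f) ->
  exists (cell : nat -> X -> X) (blk : X -> nat) (pos : X -> X),
    [/\ forall k y, blk (cell k y) = k, forall k y, pos (cell k y) = y
      & forall x, cell (blk x) (pos x) = x].
Proof.
case=> f [g fK gK].
exists (fun k y => g (Cantor.to_nat (k, f y))), (fun x => (Cantor.of_nat (f x)).1).
exists (fun x => g (Cantor.of_nat (f x)).2).
split=> [k y | k y | x]; rewrite ?gK ?Cantor.cancel_of_to ?fK //.
by rewrite -surjective_pairing Cantor.cancel_to_of fK.
Qed.

Theorem lemma3p11 (p : nat) (hp : prime p) (X : eqType)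
  (hX : exists f : X -> nat, bijective f) :
  B1_infinite_sum_ring p X /\ B1_K0_trivial p X.
Proof.
have p_gt1 := prime_gt1 hp.
have [cell [blk [pos [blk_cell pos_cell cell_blk_pos]]]] := nat_prod_decomposition hX.
split; first exact: (B1_infinite_sum_ring_holds p_gt1 blk_cell pos_cell cell_blk_pos).
exact: (B1_K0_trivial_holds p_gt1 blk_cell pos_cell cell_blk_pos).
Qed.
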